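(* (Truth lemma) For every state $(\Delta,\pi,i)$ of the canonical model $\mathcal{M}^{Can}$ and every $\alpha\in\mathcal{L}_T$: $\mathcal{M}^{Can},(\Delta,\pi,i)\models\alpha$ if and only if $\alpha\in\Delta$.
   Context: $\mathcal{L}_T$: $\alpha::=\varphi\mid\varphi\rightsquigarrow\varphi\mid B(\alpha)\mid\alpha*\alpha\mid\neg\alpha$, with $\varphi$ ranging over classical propositional formulas (set $\mathcal{L}_{CL}$, built from variables, $\bot$ and classical connectives) and $*\in\{\land,\lor,\to,\leftrightarrow\}$. SBTrust is the Hilbert system ($\varphi,\psi,\chi,\varphi_i,\psi_i$ propositional; $\alpha,\beta\in\mathcal{L}_T$; rule outputs in $\mathcal{L}_T$): classical tautologies and Modus Ponens; $\varphi\rightsquigarrow\varphi$; $(\varphi\rightsquigarrow\bot)\to\neg\varphi$; $((\psi\land\chi)\rightsquigarrow\varphi)\to(\psi\rightsquigarrow(\chi\to\varphi))$; $(\neg(\varphi\leftrightarrow\psi)\rightsquigarrow\bot)\to((\varphi\rightsquigarrow\chi)\leftrightarrow(\psi\rightsquigarrow\chi))$; rule RCK: from $(\varphi_1\land\dots\land\varphi_n)\to\varphi_{n+1}$ infer $\bigwedge_{j\le n}(\psi\rightsquigarrow\varphi_j)\to(\psi\rightsquigarrow\varphi_{n+1})$; rule $\mathbf{S5_F}$: from $(\ell_1\land\dots\land\ell_n)\to\chi$ infer $(\ell_1\land\dots\land\ell_n)\to(\neg\chi\rightsquigarrow\bot)$, each $\ell_j$ being $\varphi_j\rightsquigarrow\psi_j$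 or its negation, $\chi$ propositional; $B(\alpha\to\beta)\to(B\alpha\to B\beta)$; $B\alpha\to\neg B\neg\alpha$; $B\alpha\to BB\alpha$; necessitation for $B$. MCS: $\Gamma\subseteq\mathcal{L}_T$ with $\Gamma\nvdash\bot$ and, for each $\alpha$, $\alpha\in\Gamma$ or $\neg\alpha\in\Gamma$. $\Gamma\leftrightsquigarrow\Delta$ iff the MCSs contain the same formulas of the form $\chi\rightsquigarrow\psi$; $[\Gamma]_\leftrightsquigarrow$ its class. $\rightsquigarrow_\varphi(\Gamma)=\{\psi:\varphi\rightsquigarrow\psi\in\Gamma\}$; $\Delta$ is $\varphi$-likely for $\Gamma$ if $\rightsquigarrow_\varphi(\Gamma)\subseteq\Delta$. $S_\Gamma=[\Gamma]_\leftrightsquigarrow\times\mathcal{L}_{CL}\times\{0,1,2\}$; $(\Delta,\varphi,i)\succeq_\Gamma(\Omega,\psi,j)$ iff ($\Delta$ is $\varphi$-likely for $\Gamma$ and $\varphi\in\Omega$) or ($i=1,j=0$) or ($i=2,j=1$) or ($i=0,j=2$). Fix a set $I$ containing exactly one representative of each $\leftrightsquigarrow$-class. The canonical model is $\mathcal{M}^{Can}=\langle S,(S_\Gamma)_{\Gamma\in I},(\succeq_\Gamma)_{\Gamma\in I},R,V\rangle$ with $S=\bigcup_{\Gamma\in I}S_\Gamma$, $V(p)=\{(\Delta,\varphi,i)\in S:p\in\Delta\}$, and $(\Delta,\varphi,i)R(\Omega,\psi,j)$ iff for all $\alpha\in\mathcal{L}_T$, $B(\alpha)\in\Delta\Rightarrow\alpha\in\Omega$.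 Truth in such a structure: $s\models p$ iff $s\in V(p)$; Boolean clauses as usual; $s\models\varphi\rightsquigarrow\psi$ iff $\mathit{most}(\|\varphi\|_\Gamma)\subseteq\|\psi\|_\Gamma$ where $s\in S_\Gamma$, $\|\varphi\|_\Gamma=\{v\in S_\Gamma:v\models\varphi\}$ and $\mathit{most}(X)=\{x\in X:\forall y\in X\,(y\succeq_\Gamma x\Rightarrow x\succeq_\Gamma y)\}$; $s\models B(\alpha)$ iff $v\models\alpha$ for all $v$ with $sRv$. *)

From Stdlib Require Import List.
Import ListNotations.

Inductive cl : Type :=
| CVar  : nat -> cl
| CBot  : cl
| CNeg  : cl -> cl
| CAnd  : cl -> cl -> cl
| COr   : cl -> cl -> cl
| CImp  : cl -> cl -> cl
| CIff  : cl -> cl -> cl.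

(* L_T.  Classical formulas are embedded via [emb] (below) so that each
   classical formula has a unique representation as an L_T formula. *)
Inductive fT : Type :=
| Var  : nat -> fT
| Bot  : fT
| Cnd  : cl -> cl -> fT
| Bx   : fT -> fT
| Conj : fT -> fT -> fT
| Disj : fT -> fT -> fT
| Impl : fT -> fT -> fT
| Iff  : fT -> fT -> fT
| Neg  : fT -> fT.

Fixpoint emb (p : cl) : fT :=
  match p with
  | CVar n => Var n
  | CBot => Bot
  | CNeg a => Neg (emb a)
  | CAnd a b => Conj (emb a) (emb b)
  | COr a b => Disj (emb a) (emb b)
  | CImp a b => Impl (emb a) (emb b)
  | CIff a b => Iff (emb a) (emb b)
  end.

Fixpoint teval (v : fT -> bool) (a : fT) : bool :=
  match a with
  | Bot => false
  | Conj a b => teval v a && teval v b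
  | Disj a b => teval v a || teval v b
  | Impl a b => implb (teval v a) (teval v b)
  | Iff a b => Bool.eqb (teval v a) (teval v b)
  | Neg a => negb (teval v a)
  | x => v x
  end.

Definition tautology (a : fT) : Prop := forall v, teval v a = true.

Fixpoint bigCAnd (p : cl) (ps : list cl) : cl :=
  match ps with
  | [] => p
  | q :: qs => CAnd p (bigCAnd q qs)
  end.

Fixpoint bigConj (a : fT) (l : list fT) : fT :=
  match l with
  | [] => a
  | b :: bs => Conj a (bigConj b bs)
  end.

Definition condConj (psi p : cl) (ps : list cl) : fT :=
  bigConj (Cnd psi p) (map (Cnd psi) ps).

Definition is_lit (l : fT) : Prop :=
  exists p q, l = Cnd p q \/ l = Neg (Cnd p q).

Inductive Prv : fT -> Prop :=
| Ax_taut : forall a, tautology a -> Prv a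
| R_MP : forall a b, Prv a -> Prv (Impl a b) -> Prv b
| Ax_id : forall p, Prv (Cnd p p)
| Ax_bot : forall p, Prv (Impl (Cnd p CBot) (Neg (emb p)))
| Ax_sh : forall p q r,
    Prv (Impl (Cnd (CAnd q r) p) (Cnd q (CImp r p)))
| Ax_eq : forall p q r,
    Prv (Impl (Cnd (CNeg (CIff p q)) CBot) (Iff (Cnd p r) (Cnd q r)))
| R_RCK : forall (p : cl) (ps : list cl) (pn1 psi : cl),
    Prv (emb (CImp (bigCAnd p ps) pn1)) ->
    Prv (Impl (condConj psi p ps) (Cnd psi pn1))
| R_S5F : forall (l : fT) (ls : list fT) (chi : cl),
    is_lit l -> Forall is_lit ls ->
    Prv (Impl (bigConj l ls) (emb chi)) ->
    Prv (Impl (bigConj l ls) (Cnd (CNeg chi) CBot))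
| Ax_K : forall a b, Prv (Impl (Bx (Impl a b)) (Impl (Bx a) (Bx b)))
| Ax_D : forall a, Prv (Impl (Bx a) (Neg (Bx (Neg a))))
| Ax_4 : forall a, Prv (Impl (Bx a) (Bx (Bx a)))
| R_Nec : forall a, Prv a -> Prv (Bx a).

Definition fset := fT -> Prop.

Definition derives (G : fset) (a : fT) : Prop :=
  exists l : list fT, (forall x, In x l -> G x) /\ Prv (fold_right Impl a l).

Definition MCS (G : fset) : Prop :=
  ~ derives G Bot /\ forall a, G a \/ G (Neg a).

Definition ceq (G D : fset) : Prop :=
  forall p q, G (Cnd p q) <-> D (Cnd p q).

Definition likely (G : fset) (p : cl) (D : fset) : Prop :=
  forall q, G (Cnd p q) -> D (emb q).

Inductive three : Type := i0 | i1 | i2.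

Record state : Type := St { st_D : fset; st_f : cl; st_i : three }.

(* s in S_Gamma  =  [Gamma] x L_CL x {0,1,2} *)
Definition inS (G : fset) (s : state) : Prop :=
  MCS (st_D s) /\ ceq (st_D s) G.

(* I contains exactly one representative of each <~~>-class *)
Definition rep_set (I : fset -> Prop) : Prop :=
  (forall G, I G -> MCS G) /\
  (forall D, MCS D -> exists G, I G /\ ceq D G) /\
  (forall G G', I G -> I G' -> ceq G G' -> forall a, G a <-> G' a).

Definition inSS (I : fset -> Prop) (s : state) : Prop :=
  exists G, I G /\ inS G s.

Definition geq (G : fset) (x y : state) : Prop :=
  (likely G (st_f x) (st_D x) /\ st_D y (emb (st_f x))) \/
  (st_i x = i1 /\ st_i y = i0) \/
  (st_i x = i2 /\ st_i y = i1) \/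
  (st_i x = i0 /\ st_i y = i2).

Definition most (G : fset) (X : state -> Prop) (x : state) : Prop :=
  X x /\ forall y, X y -> geq G y x -> geq G x y.

Definition Rel (s v : state) : Prop :=
  forall a, st_D s (Bx a) -> st_D v a.

Fixpoint satCL (s : state) (p : cl) : Prop :=
  match p with
  | CVar n => st_D s (Var n)
  | CBot => False
  | CNeg a => ~ satCL s a
  | CAnd a b => satCL s a /\ satCL s b
  | COr a b => satCL s a \/ satCL s b
  | CImp a b => satCL s a -> satCL s b
  | CIff a b => satCL s a <-> satCL s b
  end.

Definition ext (G : fset) (p : cl) (v : state) : Prop := inS G v /\ satCL v p.

Fixpoint sat (I : fset -> Prop) (s : state) (a : fT) : Prop :=
  match a with
  | Var n => st_D s (Var n)
  | Bot => False
  | Cnd p q =>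
      forall G, I G -> inS G s ->
        forall v, most G (ext G p) v -> ext G q v
  | Bx b => forall v, inSS I v -> Rel s v -> sat I v b
  | Conj a b => sat I s a /\ sat I s b
  | Disj a b => sat I s a \/ sat I s b
  | Impl a b => sat I s a -> sat I s b
  | Iff a b => sat I s a <-> sat I s b
  | Neg a => ~ sat I s a
  end.

Lemma satCL_emb I s p : sat I s (emb p) <-> satCL s p.
Proof.
  induction p; simpl; try tauto.
Qed.

From Stdlib Require Import List Bool Classical ClassicalEpsilon Cantor Lia.
Import ListNotations.

(* Induction on the formula: the Boolean cases are the closure properties of
   maximal consistent sets, and the B case is the usual existence lemma via
   Lindenbaum's lemma.  For conditionals, the literals of an MCS fix its
   ↭-class, and rule S5_F turns whatever these literals derive into a formula
   ¬χ ⇝ ⊥ stating that χ holds throughout the class.  If φ ⇝ ψ ∉ Δ, a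
   φ-likely MCS Ω of the class containing ¬ψ yields the state (Ω, φ, i),
   which is ⪰ every φ-state, hence most, and refutes ψ.  Conversely, a most
   φ-state (Ω, χ, i) must beat every φ-state (Ω', χ, i+1) of the class
   through the likelihood clause, as the index clauses point the other way;
   so Ω is χ-likely and χ holds in every φ-world of the class.  Then Δ
   contains ¬(φ ↔ χ ∧ φ) ⇝ ⊥, hence χ ∧ φ ⇝ ψ and χ ⇝ (φ → ψ), and
   χ-likelihood puts φ → ψ, hence ψ, into Ω. *)

Ltac truth_table := let v := fresh "v" in intro v; simpl;
  repeat match goal with |- context [teval v ?x] => destruct (teval v x) end;
  reflexivity.

Lemma teval_fold v b l : teval v (fold_right Impl b l) = true <->
  ((forall x, In x l -> teval v x = true) -> teval v b = true).
Proof.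
  induction l as [|a l IH]; simpl.
  - split; [auto|]. intros H; apply H; intros x [].
  - destruct (teval v a) eqn:Ha; simpl.
    + rewrite IH. split.
      * intros H H'; apply H; intros; apply H'; auto.
      * intros H H'; apply H; intros x [<-|Hx]; auto.
    + split; [|reflexivity]. intros _ H.
      assert (teval v a = true) by (apply H; auto). congruence.
Qed.

Lemma teval_bigConj v a l x :
  teval v (bigConj a l) = true -> In x l -> teval v x = true.
Proof.
  revert a; induction l as [|b l IH]; intros a; simpl; [tauto|].
  rewrite andb_true_iff. intros [_ Hb] [<-|Hx].
  - destruct l; simpl in Hb; [|apply andb_true_iff in Hb]; tauto.
  - exact (IH b Hb Hx).
Qed.

Lemma prv_taut_mp a b : Prv a -> tautology (Impl a b) -> Prv b.
Proof. intros Ha Hab. exact (R_MP a b Ha (Ax_taut _ Hab)). Qed.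

Definition consistent (G : fset) : Prop := ~ derives G Bot.

Definition fset_add (G : fset) (a : fT) : fset := fun x => G x \/ x = a.

Lemma derives_mono (G G' : fset) a :
  (forall x, G x -> G' x) -> derives G a -> derives G' a.
Proof. intros H [l [Hl Hp]]. exists l; split; auto. Qed.

Lemma derives_prv G a : Prv a -> derives G a.
Proof. intros Ha. exists []; split; [intros _ []|exact Ha]. Qed.

Lemma derives_in (G : fset) a : G a -> derives G a.
Proof.
  intros Ha. exists [a]; split; [intros x [<-|[]]; exact Ha|].
  apply Ax_taut; truth_table.
Qed.

Lemma derives_taut2 G a b c : derives G a -> derives G b ->
  tautology (Impl a (Impl b c)) -> derives G c.
Proof.
  intros [l1 [Hl1 Hp1]] [l2 [Hl2 Hp2]] Ht.
  exists (l1 ++ l2). split.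
  - intros x Hx; apply in_app_or in Hx; destruct Hx; auto.
  - apply (R_MP _ _ Hp2), (R_MP _ _ Hp1), Ax_taut. intro v. simpl.
    apply implb_true_iff; intros E1; apply implb_true_iff; intros E2.
    rewrite teval_fold in E1, E2 |- *. intros Hall.
    specialize (Ht v). simpl in Ht.
    rewrite E1, E2 in Ht by (intros; apply Hall, in_or_app; auto). exact Ht.
Qed.

Lemma derives_taut G a b : derives G a -> tautology (Impl a b) -> derives G b.
Proof.
  intros Ha Hab. apply (derives_taut2 G a a b Ha Ha).
  intro v; specialize (Hab v); simpl in *. destruct (teval v a); exact Hab.
Qed.

Lemma deduction G a b : derives (fset_add G a) b -> derives G (Impl a b).
Proof.
  intros [l [Hl Hp]]. revert b Hp. induction l as [|x l IH]; intros b Hp.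
  - apply (derives_taut _ b); [apply derives_prv, Hp|truth_table].
  - assert (IHx : derives G (Impl a (Impl x b))).
    { apply IH; [intros y Hy; apply Hl; right; exact Hy|].
      apply (prv_taut_mp _ _ Hp). intro v. simpl.
      apply implb_true_iff. rewrite implb_true_iff, !teval_fold. simpl.
      rewrite implb_true_iff. tauto. }
    destruct (Hl x (or_introl eq_refl)) as [Hx| ->].
    + apply (derives_taut2 _ _ _ _ IHx (derives_in _ _ Hx)); truth_table.
    + apply (derives_taut _ _ _ IHx); truth_table.
Qed.

Lemma consistent_add_or_neg G a : consistent G ->
  ~ consistent (fset_add G a) -> consistent (fset_add G (Neg a)).
Proof.
  intros HG Ha HNa. apply NNPP, deduction in Ha. apply deduction in HNa.
  apply HG, (derives_taut2 _ _ _ _ Ha HNa); truth_table.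
Qed.

Lemma derives_absorb (G : fset) (Q : cl -> Prop) r0 b :
  Q r0 -> (forall r1 r2, Q r1 -> Q r2 -> Q (CAnd r1 r2)) ->
  derives (fun x => G x \/ exists r, Q r /\ x = emb r) b ->
  exists r, Q r /\ derives G (Impl (emb r) b).
Proof.
  intros Hr0 HQ [l [Hl Hp]].
  assert (Hd : derives (fun x => G x \/ In x l) b)
    by (exists l; split; [intros x Hx; right; exact Hx|exact Hp]).
  clear Hp; revert b Hd; induction l as [|x l IH]; intros b Hd.
  - exists r0; split; [exact Hr0|].
    apply (derives_taut _ b); [|truth_table].
    refine (derives_mono _ _ _ _ Hd). intros y [Hy|[]]; exact Hy.
  - destruct (IH (fun y Hy => Hl y (or_intror Hy)) (Impl x b)) as [r [Hr Hrb]].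
    { apply deduction; refine (derives_mono _ _ _ _ Hd).
      intros y [Hy|[<-|Hy]]; unfold fset_add; auto. }
    destruct (Hl x (or_introl eq_refl)) as [Hx|[r' [Hr' ->]]].
    + exists r; split; [exact Hr|].
      apply (derives_taut2 _ _ _ _ Hrb (derives_in _ _ Hx)); truth_table.
    + exists (CAnd r r'); split; [apply HQ; assumption|].
      apply (derives_taut _ _ _ Hrb); truth_table.
Qed.

Lemma mcs_derives D a : MCS D -> derives D a -> D a.
Proof.
  intros [Hc Hm] Ha. destruct (Hm a) as [|Hn]; [assumption|].
  exfalso; apply Hc, (derives_taut2 _ _ _ _ Ha (derives_in _ _ Hn)); truth_table.
Qed.

Lemma mcs_prv D a : MCS D -> Prv a -> D a.
Proof. intros HD Ha. apply mcs_derives, derives_prv; assumption. Qed.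

Lemma mcs_taut D a b : MCS D -> D a -> tautology (Impl a b) -> D b.
Proof.
  intros HD Ha Hab. apply mcs_derives, (derives_taut _ a); auto using derives_in.
Qed.

Lemma mcs_taut2 D a b c : MCS D -> D a -> D b ->
  tautology (Impl a (Impl b c)) -> D c.
Proof.
  intros HD Ha Hb Habc.
  apply mcs_derives, (derives_taut2 _ a b); auto using derives_in.
Qed.

Lemma mcs_mp D a b : MCS D -> D (Impl a b) -> D a -> D b.
Proof. intros HD Hab Ha. apply (mcs_taut2 D _ _ _ HD Hab Ha); truth_table. Qed.

Lemma mcs_bot D : MCS D -> ~ D Bot.
Proof. intros [Hc _] H; apply Hc, derives_in, H. Qed.

Lemma mcs_neg D a : MCS D -> (D (Neg a) <-> ~ D a).
Proof.
  intros HD. split.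
  - intros Hn Ha. apply (mcs_bot D HD), (mcs_taut2 D _ _ _ HD Ha Hn); truth_table.
  - intros H. destruct (proj2 HD a); tauto.
Qed.

Lemma mcs_conj D a b : MCS D -> (D (Conj a b) <-> D a /\ D b).
Proof.
  intros HD; split.
  - intros H; split; apply (mcs_taut D _ _ HD H); truth_table.
  - intros [Ha Hb]; apply (mcs_taut2 D _ _ _ HD Ha Hb); truth_table.
Qed.

Lemma mcs_disj D a b : MCS D -> (D (Disj a b) <-> D a \/ D b).
Proof.
  intros HD; split.
  - intros H. destruct (classic (D a)) as [Ha|Ha]; [left; exact Ha|right].
    apply (mcs_neg D a HD) in Ha. apply (mcs_taut2 D _ _ _ HD H Ha); truth_table.
  - intros [H|H]; apply (mcs_taut D _ _ HD H); truth_table.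
Qed.

Lemma mcs_impl D a b : MCS D -> (D (Impl a b) <-> (D a -> D b)).
Proof.
  intros HD; split; [apply mcs_mp, HD|]. intros H.
  destruct (classic (D a)) as [Ha|Ha].
  - apply (mcs_taut D _ _ HD (H Ha)); truth_table.
  - apply (mcs_neg D a HD) in Ha. apply (mcs_taut D _ _ HD Ha); truth_table.
Qed.

Lemma mcs_iff D a b : MCS D -> (D (Iff a b) <-> (D a <-> D b)).
Proof.
  intros HD. split.
  - intros H; split; intros H'; apply (mcs_taut2 D _ _ _ HD H H'); truth_table.
  - intros H. destruct (proj2 HD a) as [Ha|Ha].
    + apply (mcs_taut2 D _ _ _ HD Ha (proj1 H Ha)); truth_table.
    + assert (Hb : D (Neg b))
        by (rewrite (mcs_neg D b HD), <- H; apply mcs_neg; assumption).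
      apply (mcs_taut2 D _ _ _ HD Ha Hb); truth_table.
Qed.

Lemma mcs_bigConj D a l : MCS D -> D a -> (forall x, In x l -> D x) ->
  D (bigConj a l).
Proof.
  intros HD; revert a; induction l as [|b l IH]; intros a Ha Hl; simpl; [exact Ha|].
  apply (mcs_conj D _ _ HD); split; [exact Ha|].
  apply IH; [apply Hl; left; reflexivity|intros x Hx; apply Hl; right; exact Hx].
Qed.

Lemma satCL_mcs s p : MCS (st_D s) -> (satCL s p <-> st_D s (emb p)).
Proof.
  intros HD. induction p; simpl.
  - reflexivity.
  - split; [tauto|apply mcs_bot, HD].
  - rewrite (mcs_neg _ _ HD). tauto.
  - rewrite (mcs_conj _ _ _ HD). tauto.
  - rewrite (mcs_disj _ _ _ HD). tauto.
  - rewrite (mcs_impl _ _ _ HD). tauto.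
  - rewrite (mcs_iff _ _ _ HD). tauto.
Qed.

Definition npair (a b : nat) : nat := Cantor.to_nat (a, b).

Lemma npair_inj a b c d : npair a b = npair c d -> a = c /\ b = d.
Proof.
  intros H; apply (f_equal Cantor.of_nat) in H; unfold npair in H.
  rewrite !Cantor.cancel_of_to in H. injection H; auto.
Qed.

Fixpoint encc (p : cl) : nat :=
  match p with
  | CVar n => npair 0 n
  | CBot => npair 1 0
  | CNeg a => npair 2 (encc a)
  | CAnd a b => npair 3 (npair (encc a) (encc b))
  | COr a b => npair 4 (npair (encc a) (encc b))
  | CImp a b => npair 5 (npair (encc a) (encc b))
  | CIff a b => npair 6 (npair (encc a) (encc b))
  end.

Fixpoint encT (a : fT) : nat :=
  match a with
  | Var n => npair 0 n
  | Bot => npair 1 0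
  | Cnd p q => npair 2 (npair (encc p) (encc q))
  | Bx a => npair 3 (encT a)
  | Conj a b => npair 4 (npair (encT a) (encT b))
  | Disj a b => npair 5 (npair (encT a) (encT b))
  | Impl a b => npair 6 (npair (encT a) (encT b))
  | Iff a b => npair 7 (npair (encT a) (encT b))
  | Neg a => npair 8 (encT a)
  end.

Lemma encc_inj p q : encc p = encc q -> p = q.
Proof.
  revert q; induction p; destruct q; simpl; intros H;
    apply npair_inj in H; destruct H as [H1 H2]; try discriminate H1;
    first [ congruence | solve [f_equal; auto]
          | (apply npair_inj in H2 as [H3 H4]; f_equal; auto) ].
Qed.

Lemma encT_inj a b : encT a = encT b -> a = b.
Proof.
  revert b; induction a; destruct b; simpl; intros H;
    apply npair_inj in H; destruct H as [H1 H2]; try discriminate H1;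
    first [ congruence | solve [f_equal; auto]
          | (apply npair_inj in H2 as [H3 H4]; f_equal; auto using encc_inj) ].
Qed.

Definition enum_fT (n : nat) : fT := epsilon (inhabits Bot) (fun a => encT a = n).

Lemma enum_fT_encT a : enum_fT (encT a) = a.
Proof.
  apply encT_inj, (epsilon_spec (inhabits Bot) (fun b => encT b = encT a)).
  exists a; reflexivity.
Qed.

Fixpoint chain (Sg : fset) (n : nat) : fset :=
  match n with
  | O => Sg
  | S m =>
      let a := enum_fT m in
      if excluded_middle_informative (consistent (fset_add (chain Sg m) a))
      then fset_add (chain Sg m) a else fset_add (chain Sg m) (Neg a)
  end.

Lemma chain_consistent Sg n : consistent Sg -> consistent (chain Sg n).
Proof.
  intros H0; induction n as [|n IH]; simpl; [exact H0|].
  destruct (excluded_middle_informative _); auto using consistent_add_or_neg.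
Qed.

Lemma chain_mono Sg m n x : m <= n -> chain Sg m x -> chain Sg n x.
Proof.
  induction 1 as [|n _ IH]; [tauto|]. intros Hx; simpl.
  destruct (excluded_middle_informative _); left; auto.
Qed.

Lemma chain_bound Sg l : (forall x, In x l -> exists n, chain Sg n x) ->
  exists N, forall x, In x l -> chain Sg N x.
Proof.
  induction l as [|a l IH]; intros Hl; [exists 0; intros _ []|].
  destruct (Hl a (or_introl eq_refl)) as [n Hn].
  destruct IH as [N HN]; [intros x Hx; apply Hl; right; exact Hx|].
  exists (max n N). intros x [<-|Hx].
  - apply (chain_mono Sg n); [lia|exact Hn].
  - apply (chain_mono Sg N); [lia|exact (HN x Hx)].
Qed.

Lemma lindenbaum Sg : consistent Sg -> exists O, MCS O /\ (forall x, Sg x -> O x).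
Proof.
  intros H0. exists (fun x => exists n, chain Sg n x). split; [split|].
  - intros [l [Hl Hp]]. destruct (chain_bound Sg l Hl) as [N HN].
    apply (chain_consistent Sg N H0). exists l; split; assumption.
  - intros a.
    assert (Hstep : chain Sg (S (encT a)) a \/ chain Sg (S (encT a)) (Neg a)).
    { simpl. rewrite enum_fT_encT.
      destruct (excluded_middle_informative _); [left|right]; right; reflexivity. }
    destruct Hstep; [left|right]; eexists; eassumption.
  - intros x Hx; exists 0; exact Hx.
Qed.

Definition lits (D : fset) : fset := fun x => is_lit x /\ D x.

Lemma ceq_trans A B C : ceq A B -> ceq B C -> ceq A C.
Proof. intros H1 H2 p q; rewrite (H1 p q); apply H2. Qed.

Lemma lit_ceq D O : MCS D -> MCS O -> (forall x, lits D x -> O x) -> ceq O D.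
Proof.
  intros HD HO H p q; split; intro Hc.
  - apply NNPP; intros Hn. refine (proj1 (mcs_neg O _ HO) (H _ _) Hc).
    split; [exists p, q; right; reflexivity|apply mcs_neg; assumption].
  - apply H; split; [exists p, q; left; reflexivity|exact Hc].
Qed.

Notation univ chi := (Cnd (CNeg chi) CBot).

Lemma mcs_univ_of_lits D chi : MCS D -> derives (lits D) (emb chi) -> D (univ chi).
Proof.
  intros HD [l [Hl Hp]].
  assert (Hh : D (Cnd CBot CBot)) by (apply mcs_prv; [exact HD|apply Ax_id]).
  assert (Hchi : Prv (Impl (bigConj (Cnd CBot CBot) l) (emb chi))).
  { apply (prv_taut_mp _ _ Hp). intro v. apply implb_true_iff; intros E.
    simpl. apply implb_true_iff; intros Eb. rewrite teval_fold in E.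
    apply E. intros x Hx; exact (teval_bigConj v _ l x Eb Hx). }
  assert (HS5 : Prv (Impl (bigConj (Cnd CBot CBot) l) (univ chi))).
  { apply R_S5F; [exists CBot, CBot; left; reflexivity| |exact Hchi].
    apply Forall_forall; intros x Hx; exact (proj1 (Hl x Hx)). }
  apply (mcs_mp D _ _ HD (mcs_prv D _ HD HS5)), mcs_bigConj; [exact HD|exact Hh|].
  intros x Hx; exact (proj2 (Hl x Hx)).
Qed.

Lemma mcs_univ D chi : MCS D ->
  (forall O, MCS O -> ceq O D -> O (emb chi)) -> D (univ chi).
Proof.
  intros HD Hall. apply mcs_univ_of_lits; [exact HD|].
  destruct (classic (consistent (fset_add (lits D) (Neg (emb chi))))) as [Hc|Hi].
  - exfalso. destruct (lindenbaum _ Hc) as [O [HO HS]].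
    assert (HOD : ceq O D)
      by (apply (lit_ceq D O HD HO); intros x Hx; apply HS; left; exact Hx).
    apply (proj1 (mcs_neg O _ HO) (HS _ (or_intror eq_refl))), Hall; assumption.
  - apply NNPP, deduction in Hi. apply (derives_taut _ _ _ Hi); truth_table.
Qed.

Lemma mcs_cnd_conj D p r1 r2 : MCS D -> D (Cnd p r1) -> D (Cnd p r2) ->
  D (Cnd p (CAnd r1 r2)).
Proof.
  intros HD H1 H2.
  assert (HR : Prv (Impl (condConj p r1 [r2]) (Cnd p (CAnd r1 r2))))
    by (apply R_RCK, Ax_taut; truth_table).
  apply (mcs_mp D _ _ HD (mcs_prv D _ HD HR)). cbn.
  apply (mcs_conj D _ _ HD); split; assumption.
Qed.

(* The detour through φ ∧ (r → q) is needed because RCK only accepts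
   classical premises, whereas r → q is derived from literals. *)
Lemma mcs_cnd_of_lits D p r q : MCS D -> D (Cnd p r) ->
  derives (lits D) (emb (CImp r q)) -> D (Cnd p q).
Proof.
  intros HD Hr Hrq.
  assert (Hx : D (univ (CIff p (CAnd p (CImp r q))))).
  { apply mcs_univ_of_lits; [exact HD|].
    apply (derives_taut _ _ _ Hrq); truth_table. }
  assert (Hpx : D (Cnd p (CAnd p (CImp r q)))).
  { assert (Heq := mcs_mp D _ _ HD
                     (mcs_prv D _ HD (Ax_eq _ _ (CAnd p (CImp r q)))) Hx).
    apply (proj1 (mcs_iff D _ _ HD) Heq).
    apply mcs_prv; [exact HD|apply Ax_id]. }
  assert (HR : Prv (Impl (condConj p (CAnd p (CImp r q)) [r]) (Cnd p q)))
    by (apply R_RCK, Ax_taut; truth_table).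
  apply (mcs_mp D _ _ HD (mcs_prv D _ HD HR)). cbn.
  apply (mcs_conj D _ _ HD); split; assumption.
Qed.

Lemma exist_likely D p q : MCS D -> ~ D (Cnd p q) ->
  exists O, MCS O /\ ceq O D /\ likely D p O /\ O (Neg (emb q)).
Proof.
  intros HD Hn.
  set (Sg := fun x => fset_add (lits D) (Neg (emb q)) x \/
                      exists r, D (Cnd p r) /\ x = emb r).
  destruct (classic (consistent Sg)) as [Hc|Hi].
  - destruct (lindenbaum _ Hc) as [O [HO HS]]. exists O.
    split; [exact HO|split; [|split]].
    + apply (lit_ceq D O HD HO); intros x Hx; apply HS; left; left; exact Hx.
    + intros r Hr; apply HS; right; exists r; split; [exact Hr|reflexivity].
    + apply HS; left; right; reflexivity.
  - exfalso; apply Hn. apply NNPP in Hi.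
    destruct (derives_absorb (fset_add (lits D) (Neg (emb q)))
                             (fun r => D (Cnd p r)) p Bot)
      as [r [Hr Hrb]].
    + apply mcs_prv; [exact HD|apply Ax_id].
    + intros r1 r2; apply mcs_cnd_conj, HD.
    + exact Hi.
    + apply (mcs_cnd_of_lits D p r q HD Hr).
      apply deduction in Hrb. apply (derives_taut _ _ _ Hrb); truth_table.
Qed.

Lemma mcs_box_of_derives D a : MCS D -> derives (fun x => D (Bx x)) a -> D (Bx a).
Proof.
  intros HD [l [Hl Hp]].
  assert (Hbox : D (Bx (fold_right Impl a l))) by (apply mcs_prv, R_Nec; assumption).
  clear Hp; induction l as [|x l IH]; [exact Hbox|].
  apply IH; [intros y Hy; apply Hl; right; exact Hy|].
  apply (mcs_mp D _ _ HD (mcs_mp D _ _ HD (mcs_prv D _ HD (Ax_K _ _)) Hbox)).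
  apply Hl; left; reflexivity.
Qed.

Lemma exist_rel_succ D a : MCS D -> ~ D (Bx a) ->
  exists O, MCS O /\ (forall b, D (Bx b) -> O b) /\ O (Neg a).
Proof.
  intros HD Hn.
  destruct (classic (consistent (fset_add (fun x => D (Bx x)) (Neg a)))) as [Hc|Hi].
  - destruct (lindenbaum _ Hc) as [O [HO HS]]. exists O.
    split; [exact HO|split; [intros b Hb; apply HS; left; exact Hb|]].
    apply HS; right; reflexivity.
  - exfalso; apply Hn, mcs_box_of_derives; [exact HD|].
    apply NNPP, deduction in Hi. apply (derives_taut _ _ _ Hi); truth_table.
Qed.

Definition succ3 (i : three) : three :=
  match i with i0 => i1 | i1 => i2 | i2 => i0 end.

Lemma geq_succ3 G x y : st_i x = succ3 (st_i y) -> geq G x y.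
Proof.
  unfold geq; intros H; right. rewrite H.
  destruct (st_i y); simpl; [left|right; left|right; right]; split; reflexivity.
Qed.

Lemma geq_pred3 G x y : st_i y = succ3 (st_i x) -> geq G x y ->
  likely G (st_f x) (st_D x) /\ st_D y (emb (st_f x)).
Proof.
  unfold geq; intros H [Hl|Hi]; [exact Hl|exfalso]. rewrite H in Hi.
  destruct (st_i x); simpl in Hi; intuition discriminate.
Qed.

Lemma most_of_likely G p O i : MCS O -> ceq O G -> likely G p O ->
  most G (ext G p) (St O p i).
Proof.
  intros HO HOG Hlik.
  assert (HOp : O (emb p))
    by (apply Hlik, HOG, mcs_prv; [exact HO|apply Ax_id]).
  split.
  - split; [split; assumption|apply (satCL_mcs (St O p i)); assumption].
  - intros y [[HyM _] Hyp] _. left; split; [exact Hlik|].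
    apply (satCL_mcs y p HyM), Hyp.
Qed.

Lemma most_likely G p v : most G (ext G p) v ->
  forall O, MCS O -> ceq O G -> O (emb p) ->
  likely G (st_f v) (st_D v) /\ O (emb (st_f v)).
Proof.
  intros [_ Hmost] O HO HOG HOp.
  apply (geq_pred3 G v (St O (st_f v) (succ3 (st_i v)))); [reflexivity|].
  apply Hmost; [|apply geq_succ3; reflexivity].
  split; [split; assumption|apply (satCL_mcs (St O _ _)); assumption].
Qed.

Lemma mcs_cnd_of_most D G p q : MCS D -> ceq D G ->
  (forall v, most G (ext G p) v -> ext G q v) -> D (Cnd p q).
Proof.
  intros HD HDG Hsat. apply NNPP; intro Hn.
  destruct (exist_likely D p q HD Hn) as [O [HO [HOD [Hlik Hq]]]].
  assert (HlikG : likely G p O) by (intros r Hr; apply Hlik, HDG, Hr).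
  destruct (Hsat _ (most_of_likely G p O i0 HO (ceq_trans _ _ _ HOD HDG) HlikG))
    as [_ HOq].
  apply (proj1 (mcs_neg O _ HO) Hq), (satCL_mcs (St O p i0) q HO), HOq.
Qed.

Lemma most_ext_of_mcs_cnd D G p q v : MCS D -> ceq D G -> D (Cnd p q) ->
  most G (ext G p) v -> ext G q v.
Proof.
  intros HD HDG Hpq Hv.
  pose proof Hv as [[[HvM HvG] Hvp] _].
  apply (satCL_mcs v p HvM) in Hvp.
  set (r := st_f v).
  assert (Hr : D (univ (CIff p (CAnd r p)))).
  { apply (mcs_univ D _ HD). intros O HO HOD. simpl.
    apply (mcs_iff O _ _ HO). rewrite (mcs_conj O _ _ HO).
    split; [|tauto]. intros HOp; split; [|exact HOp].
    apply (most_likely G p v Hv O HO (ceq_trans _ _ _ HOD HDG) HOp). }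
  assert (Hrp : D (Cnd r (CImp p q))).
  { apply (mcs_mp D _ _ HD (mcs_prv D _ HD (Ax_sh q r p))).
    refine (proj1 (proj1 (mcs_iff D _ _ HD)
      (mcs_mp D _ _ HD (mcs_prv D _ HD (Ax_eq p (CAnd r p) q)) Hr)) Hpq). }
  assert (Hq : st_D v (emb q)).
  { destruct (most_likely G p v Hv _ HvM HvG Hvp) as [Hlik _].
    apply (mcs_mp _ _ _ HvM (Hlik _ (proj1 (HDG _ _) Hrp))), Hvp. }
  split; [split; assumption|apply (satCL_mcs v q HvM), Hq].
Qed.

Theorem lemma3 :
  forall (I : fset -> Prop), rep_set I ->
  forall (s : state), inSS I s ->
  forall a : fT, sat I s a <-> st_D s a.
Proof.
  intros I HI s Hs a. revert s Hs.
  induction a as [n| |p q|a IH|a1 IH1 a2 IH2|a1 IH1 a2 IH2|a1 IH1 a2 IH2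
                 |a1 IH1 a2 IH2|a IH];
    intros s Hs; pose proof Hs as [G [HG [HD HDG]]]; simpl;
    try rewrite (IH s Hs); try rewrite (IH1 s Hs), (IH2 s Hs).
  - reflexivity.
  - split; [contradiction|apply mcs_bot, HD].
  - split.
    + intros Hsat. exact (mcs_cnd_of_most _ G p q HD HDG (Hsat G HG (conj HD HDG))).
    + intros Hpq G' _ [_ HDG'] v. exact (most_ext_of_mcs_cnd _ G' p q v HD HDG' Hpq).
  - split; [|intros Hb v Hv HR; apply (IH v Hv), HR, Hb].
    intros Hsat. apply NNPP; intros Hn.
    destruct (exist_rel_succ _ a HD Hn) as [O [HO [HR Ha]]].
    destruct (proj1 (proj2 HI) O HO) as [G0 [HG0 HOG0]].
    assert (Hv : inSS I (St O CBot i0)) by (exists G0; split; [|split]; assumption).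
    apply (proj1 (mcs_neg O a HO) Ha), (IH _ Hv), Hsat; [exact Hv|exact HR].
  - symmetry; apply mcs_conj, HD.
  - symmetry; apply mcs_disj, HD.
  - symmetry; apply mcs_impl, HD.
  - symmetry; apply mcs_iff, HD.
  - symmetry; apply mcs_neg, HD.
Qed.
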